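(* Let $G$ be a connected $(2K_2, K_5-e)$-free graph. Then either $G$ is $(2K_2,\text{diamond})$-free, or there exists a partition $(V_1,\dots,V_5)$ of $V(G)$ (parts possibly empty) such that (i) $G[V_1]$ is a $(2K_2,\text{diamond})$-free graph with $\omega(G[V_1])\le\omega(G)-1$, and (ii) $V_i$ is an independent set for each $i\in\{2,3,4,5\}$.
   Context: All graphs are finite, simple and undirected. $2K_2$ is the disjoint union of two edges. $K_5-e$ is the complete graph on 5 vertices minus one edge. A diamond is $K_4$ minus an edge. A graph is $\mathcal F$-free if it has no induced subgraph isomorphic to a member of $\mathcal F$. $G[S]$ is the subgraph induced by $S$; $\omega$ is the clique number. *)

From mathcomp Require Import all_boot.
Set Implicit Arguments. Unset Strict Implicit. Unset Printing Implicit Defensive.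

Definition simple_graph (T : finType) (e : rel T) : Prop :=
  symmetric e /\ irreflexive e.

Definition connected (T : finType) (e : rel T) : Prop :=
  forall x y : T, connect e x y.

Definition induced_in (T : finType) (e : rel T) (S : {set T}) (k : nat)
  (h : rel 'I_k) : Prop :=
  exists f : 'I_k -> T, [/\ injective f, (forall i, f i \in S) &
                            forall i j, e (f i) (f j) = h i j].

Definition free_in (T : finType) (e : rel T) (S : {set T}) (k : nat)
  (h : rel 'I_k) : Prop := ~ induced_in e S h.

Definition twoK2 : rel 'I_4 := fun i j =>
  let a := nat_of_ord i in let b := nat_of_ord j in
  ((a == 0) && (b == 1)) || ((a == 1) && (b == 0)) ||
  ((a == 2) && (b == 3)) || ((a == 3) && (b == 2)).

Definition diamond : rel 'I_4 := fun i j =>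
  (i != j) && ~~ ((nat_of_ord i <= 1) && (nat_of_ord j <= 1)).

Definition K5e : rel 'I_5 := fun i j =>
  (i != j) && ~~ ((nat_of_ord i <= 1) && (nat_of_ord j <= 1)).

Definition cliqueb (T : finType) (e : rel T) (A : {set T}) : bool :=
  [forall x, forall y, (x \in A) ==> (y \in A) ==> (x != y) ==> e x y].

Definition omega_in (T : finType) (e : rel T) (S : {set T}) : nat :=
  \max_(A : {set T} | (A \subset S) && cliqueb e A) #|A|.

Definition omega (T : finType) (e : rel T) : nat := omega_in e setT.

Definition independent (T : finType) (e : rel T) (A : {set T}) : Prop :=
  forall x y, x \in A -> y \in A -> ~~ e x y.

From mathcomp Require Import all_boot.
From Stdlib Require Import Classical.

Set Implicit Arguments.
Unset Strict Implicit.
Unset Printing Implicit Defensive.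

(* If G contains an induced diamond with non-adjacent tips p, q and central
   edge c d, put the neighbours of c in V_1 and sort every other vertex by the
   first of p, q, d it is not adjacent to, or into V_5 if it is adjacent to
   all three.  The neighbourhood of c is diamond-free, since a diamond there
   together with c is a K_5 - e, and its cliques extend by c.  Each of V_2,
   V_3, V_4 lies in the common non-neighbourhood of an edge at c, hence is
   independent in a 2K_2-free graph; an edge inside V_5 would span a K_5 - e
   with p, q, d. *)

Section InducedSubgraphs.
Variables (T : finType) (e : rel T).

Lemma induced_inS (S S' : {set T}) k (h : rel 'I_k) :
  S \subset S' -> induced_in e S h -> induced_in e S' h.
Proof.
by move=> sSS' [f [f_inj fS fe]]; exists f; split=> // i; apply: subsetP (fS i).
Qed.

Lemma free_inS (S S' : {set T}) k (h : rel 'I_k) :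
  S \subset S' -> free_in e S' h -> free_in e S h.
Proof. by move=> sSS' freeS' /(induced_inS sSS'). Qed.

Lemma induced_of_seq k (h : rel 'I_k) (s : seq T) x0 :
  size s = k -> uniq s ->
  (forall i j : 'I_k, e (nth x0 s i) (nth x0 s j) = h i j) ->
  induced_in e setT h.
Proof.
move=> size_s uniq_s es; exists (fun i => nth x0 s i); split=> //.
move=> i j /eqP; rewrite nth_uniq ?size_s ?ltn_ord // => /eqP; apply: val_inj.
Qed.

Lemma independentS (A B : {set T}) :
  A \subset B -> independent e B -> independent e A.
Proof. by move=> sAB indB x y /(subsetP sAB) xB /(subsetP sAB) yB; apply: indB. Qed.

Hypotheses (e_sym : symmetric e) (e_irr : irreflexive e).

Lemma adj_neq x y : e x y -> x != y.
Proof. by apply: contraTneq => ->; rewrite e_irr. Qed.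

Lemma induced_twoK2 x y z w :
  e x y -> e z w -> ~~ e x z -> ~~ e x w -> ~~ e y z -> ~~ e y w ->
  induced_in e setT twoK2.
Proof.
move=> exy ezw nxz nxw nyz nyw.
apply: (@induced_of_seq 4 twoK2 [:: x; y; z; w] x) => //.
  rewrite /= !inE !negb_or (adj_neq exy) (adj_neq ezw) !andbT /=.
  by apply/and3P; split; [apply/andP; split|..]; apply/eqP=> eq_uv;
    move: nxz nxw nyz nyw; rewrite eq_uv ?(e_sym w z) ezw.
move: nxz nxw nyz nyw => /negbTE nxz /negbTE nxw /negbTE nyz /negbTE nyw.
move=> [[|[|[|[|i]]]] ?] [[|[|[|[|j]]]] ?] //=; rewrite /twoK2 /= ?e_irr //;
  by rewrite e_sym.
Qed.

Lemma induced_K5e v0 v1 v2 v3 v4 :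
  v0 != v1 -> ~~ e v0 v1 ->
  e v0 v2 -> e v0 v3 -> e v0 v4 -> e v1 v2 -> e v1 v3 -> e v1 v4 ->
  e v2 v3 -> e v2 v4 -> e v3 v4 ->
  induced_in e setT K5e.
Proof.
move=> n01 /negbTE e01 e02 e03 e04 e12 e13 e14 e23 e24 e34.
apply: (@induced_of_seq 5 K5e [:: v0; v1; v2; v3; v4] v0) => //.
  by rewrite /= !inE !negb_or n01 !adj_neq.
move=> [[|[|[|[|[|i]]]]] ?] [[|[|[|[|[|j]]]]] ?] //=; rewrite /K5e /=;
  first [by rewrite e_irr | done | by rewrite e_sym].
Qed.

Lemma common_nonnbrs_independent u v :
  free_in e setT twoK2 -> e u v ->
  independent e [set x | ~~ e u x & ~~ e v x].
Proof.
move=> free2K2 euv x y; rewrite !inE => /andP[nux nvx] /andP[nuy nvy].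
apply/negP=> exy; apply: free2K2; apply: (induced_twoK2 exy euv);
  by rewrite e_sym.
Qed.

Lemma common_nbrs_independent a b d :
  free_in e setT K5e -> a != b -> ~~ e a b -> e a d -> e b d ->
  independent e [set x | [&& e a x, e b x & e d x]].
Proof.
move=> freeK5e nab eab ead ebd x y.
rewrite !inE => /and3P[eax ebx edx] /and3P[eay eby edy].
apply/negP=> exy; apply: freeK5e.
by apply: (induced_K5e nab eab eax eay ead ebx eby ebd exy); rewrite e_sym.
Qed.

Lemma nbrs_diamond_free c :
  free_in e setT K5e -> free_in e [set x | e c x] diamond.
Proof.
move=> freeK5e [g [g_inj gN ge]]; apply: freeK5e.
have ecg i : e c (g i) by have := gN i; rewrite inE.
have egc i : e (g i) c by rewrite e_sym.
pose i k (lt_k4 : k < 4) := Ordinal lt_k4.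
by apply: (@induced_K5e (g (i 0 isT)) (g (i 1 isT))
                         (g (i 2 isT)) (g (i 3 isT)) c);
  rewrite ?(inj_eq g_inj) ?ge.
Qed.

Lemma nbrs_omega c : omega_in e [set x | e c x] <= (omega e).-1.
Proof.
apply/bigmax_leqP=> A /andP[sAN cliqueA].
have cNA : c \notin A by apply/negP=> /(subsetP sAN); rewrite inE e_irr.
have clique_cA : cliqueb e (c |: A).
  apply/forallP=> x; apply/forallP=> y; rewrite !in_setU1.
  apply/implyP=> /predU1P[->|xA]; apply/implyP=> /predU1P[->|yA];
    apply/implyP=> nxy.
  - by rewrite eqxx in nxy.
  - by have := subsetP sAN y yA; rewrite inE.
  - by have := subsetP sAN x xA; rewrite inE e_sym.
  - by move/forallP/(_ x)/forallP/(_ y): cliqueA; rewrite xA yA nxy.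
have : #|c |: A| <= omega e by apply: leq_bigmax_cond; rewrite subsetT.
by rewrite cardsU1 cNA; case: (omega e).
Qed.

Lemma induced_diamond_vertices :
  induced_in e setT diamond ->
  exists p q c d,
    [/\ p != q, ~~ e p q, e c p, e c q & [/\ e c d, e p d & e q d]].
Proof.
move=> [f [f_inj _ fe]]; pose i k (lt_k4 : k < 4) := Ordinal lt_k4.
exists (f (i 0 isT)), (f (i 1 isT)), (f (i 2 isT)), (f (i 3 isT)).
by rewrite (inj_eq f_inj) !fe.
Qed.

End InducedSubgraphs.

Section Labelling.
Variables (T : finType) (label : T -> nat).

Lemma label_classes_disjoint n (i j : 'I_n) :
  i != j -> [disjoint [set x | label x == i] & [set x | label x == j]].
Proof.
move=> nij; rewrite -setI_eq0; apply/eqP/setP=> x; rewrite !inE.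
by apply/andP=> -[/eqP-> /eqP/val_inj eq_ij]; rewrite eq_ij eqxx in nij.
Qed.

Lemma label_classes_cover n :
  (forall x, label x < n) -> \bigcup_(i < n) [set x | label x == i] = setT.
Proof.
move=> label_lt; apply/setP=> x; rewrite inE; apply/bigcupP.
by exists (Ordinal (label_lt x)); rewrite ?inE.
Qed.

End Labelling.

Section DiamondPartition.
Variables (T : finType) (e : rel T) (p q c d : T).

Definition diamond_label x : nat :=
  if e c x then 0 else if ~~ e p x then 1 else if ~~ e q x then 2
  else if ~~ e d x then 3 else 4.

Definition diamond_part (i : 'I_5) : {set T} := [set x | diamond_label x == i].

Lemma diamond_label_lt5 x : diamond_label x < 5.
Proof. by rewrite /diamond_label; do !case: ifP. Qed.

Lemma diamond_part0 : diamond_part ord0 = [set x | e c x].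
Proof. by apply/setP=> x; rewrite !inE /diamond_label; do !case: ifP. Qed.

Hypotheses (e_sym : symmetric e) (e_irr : irreflexive e).
Hypotheses (free2K2 : free_in e setT twoK2) (freeK5e : free_in e setT K5e).
Hypotheses (npq : p != q) (epq : ~~ e p q) (ecp : e c p) (ecq : e c q).
Hypotheses (ecd : e c d) (epd : e p d) (eqd : e q d).

Lemma diamond_part_independent i :
  i != ord0 -> independent e (diamond_part i).
Proof.
case: i => -[|[|[|[|[|i]]]]] lt_i5 // _;
  [ apply: independentS (common_nonnbrs_independent e_sym e_irr free2K2 ecp)
  | apply: independentS (common_nonnbrs_independent e_sym e_irr free2K2 ecq)
  | apply: independentS (common_nonnbrs_independent e_sym e_irr free2K2 ecd)
  | apply: independentS
      (common_nbrs_independent e_sym e_irr freeK5e npq epq epd eqd) ];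
  apply/subsetP=> x; rewrite !inE /diamond_label;
  by case: (e c x); case: (e p x); case: (e q x); case: (e d x).
Qed.

End DiamondPartition.

Theorem theorem3p9 (T : finType) (e : rel T) :
  simple_graph e -> connected e ->
  free_in e setT twoK2 -> free_in e setT K5e ->
  (free_in e setT twoK2 /\ free_in e setT diamond) \/
  exists V : 'I_5 -> {set T},
    [/\ (forall i j, i != j -> [disjoint V i & V j]),
        (\bigcup_(i < 5) V i = setT),
        (free_in e (V ord0) twoK2 /\ free_in e (V ord0) diamond),
        omega_in e (V ord0) <= (omega e).-1 &
        (forall i : 'I_5, i != ord0 -> independent e (V i))].
Proof.
move=> [e_sym e_irr] _ free2K2 freeK5e.
have [|no_diamond] := classic (induced_in e setT diamond); last by left.
move=> /induced_diamond_vertices [p [q [c [d]]]].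
move=> [npq epq ecp ecq [ecd epd eqd]]; right.
exists (diamond_part e p q c d); split.
- exact: label_classes_disjoint.
- exact/label_classes_cover/diamond_label_lt5.
- rewrite diamond_part0; split; first exact: free_inS (subsetT _) free2K2.
  exact: nbrs_diamond_free.
- by rewrite diamond_part0; apply: nbrs_omega.
- exact: diamond_part_independent.
Qed.
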